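(* For $g\ge0$, let $N_2(g)$ denote the number of gapsets of genus $g$ and depth at most $2$. Then for all $g\ge 2$, $$N_2(g)=N_2(g-1)+N_2(g-2).$$
   Context: A gapset is a finite set $G \subset \mathbb{N}_+=\{1,2,3,\dots\}$ such that for all $z \in G$, whenever $z=x+y$ with $x,y\in\mathbb{N}_+$, we have $x\in G$ or $y\in G$. The multiplicity of $G$ is the least $m\ge 1$ with $m\notin G$; its conductor is $c=\max G+1$ ($c=0$ if $G=\emptyset$); its genus is $|G|$; its depth is $\lceil c/m\rceil$. *)

From mathcomp Require Import all_boot.
From mathcomp Require Import finmap.
Set Implicit Arguments. Unset Strict Implicit. Unset Printing Implicit Defensive.
Local Open Scope fset_scope.

Definition is_gapset (G : {fset nat}) : Prop :=
  (forall z, z \in G -> 0 < z) /\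
  (forall x y, 0 < x -> 0 < y -> (x + y)%N \in G -> (x \in G) \/ (y \in G)).

Definition genus (G : {fset nat}) : nat := #|` G|.

Definition conductor (G : {fset nat}) : nat :=
  if G == fset0 then 0 else (\max_(z <- G) z).+1.

(* multiplicity = least m >= 1 with m \notin G.  Such an m lies in
   [1, conductor G + 1] (the conductor itself, or 1 if G is empty, is a
   non-gap), so it is found by a bounded search over iota 1 (conductor G).+1. *)
Definition multiplicity (G : {fset nat}) : nat :=
  (find (fun m => m \notin G) (iota 1 (conductor G).+1)).+1.

Definition depth (G : {fset nat}) : nat :=
  (conductor G + (multiplicity G).-1) %/ multiplicity G.

Definition gapset_g_depth_le2 (g : nat) (G : {fset nat}) : Prop :=
  is_gapset G /\ genus G = g /\ depth G <= 2.

(* L enumerates (without repetition) exactly the gapsets of genus g and depth <= 2;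
   then size L = N_2(g). *)
Definition enumerates_N2 (g : nat) (L : seq {fset nat}) : Prop :=
  uniq L /\ (forall G, G \in L <-> gapset_g_depth_le2 g G).

(* A gapset of multiplicity m has depth at most 2 exactly when
   [1, m) ⊆ G ⊆ [1, 2m) \ {m}; all such sets are automatically gapsets, since
   a summand of an element below 2m lies below m.  For m ≥ 1 these sets of
   multiplicity m + 1 split according to whether 2m + 1 is a gap: removing
   m and 2m + 1 and shifting [m + 2, 2m] down by one gives a bijection with
   the sets of multiplicity m, lowering the genus by 1 or by 2.  Hence the
   gapsets of genus g + 2 are in bijection with the disjoint union of those
   of genus g + 1 and of genus g. *)

From mathcomp Require Import all_boot finmap zify.
Set Implicit Arguments. Unset Strict Implicit.
Local Open Scope fset_scope.

Lemma mem_lt_conductor (G : {fset nat}) x : x \in G -> x < conductor G.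
Proof.
rewrite /conductor; case: eqP => [->|_]; first by rewrite in_fset0.
by move=> Gx; rewrite ltnS (leq_bigmax_seq x).
Qed.

Lemma conductor_leq (G : {fset nat}) n :
  (forall x, x \in G -> x < n) -> conductor G <= n.
Proof.
rewrite /conductor => G_lt_n; case: eqP => // /eqP /fset0Pn [y Gy].
case: n G_lt_n (G_lt_n y Gy) => // n G_lt_n _; rewrite ltnS.
by apply/bigmax_leqP_seq => x Gx _; rewrite -ltnS G_lt_n.
Qed.

Lemma multiplicity_spec (G : {fset nat}) :
  [/\ 0 < multiplicity G, multiplicity G \notin G &
      forall x, 0 < x < multiplicity G -> x \in G].
Proof.
rewrite /multiplicity; set s := iota 1 _; set p := fun m => m \notin G.
have size_s : size s = (conductor G).+1 by rewrite size_iota.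
have has_p : has p s.
  apply/hasP; exists (conductor G).+1; first by rewrite mem_iota; lia.
  by apply/negP => /mem_lt_conductor; lia.
have find_lt : find p s < size s by rewrite -has_find.
split=> //; first by move: (nth_find 0 has_p); rewrite nth_iota -?size_s // add1n.
move=> x /andP [x_gt0 x_lt]; have := @before_find _ 0 p s x.-1.
rewrite nth_iota; last by rewrite -size_s; lia.
by rewrite add1n prednK // => /(_ x_lt)/negbFE.
Qed.

Lemma ceil_div_le2 c m : 0 < m -> ((c + m.-1) %/ m <= 2) = (c <= m.*2).
Proof. by move=> m_gt0; rewrite -ltnS ltn_divLR //; lia. Qed.

Definition shallow (m : nat) (G : {fset nat}) : Prop :=
  [/\ 0 < m, forall x, 0 < x < m -> x \in G, m \notin G
    & forall x, x \in G -> 0 < x < m.*2].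

Lemma shallow_multiplicity m G : shallow m G -> multiplicity G = m.
Proof.
case=> m_gt0 below_m m_notin _.
have [mG_gt0 mG_notin below_mG] := multiplicity_spec G.
apply/eqP; rewrite eqn_leq; apply/andP; split; rewrite leqNgt; apply/negP => lt_m.
  by move: m_notin; rewrite below_mG // m_gt0.
by move: mG_notin; rewrite below_m // mG_gt0.
Qed.

Lemma shallowP G : is_gapset G /\ depth G <= 2 <-> shallow (multiplicity G) G.
Proof.
have [m_gt0 m_notin below_m] := multiplicity_spec G; rewrite /depth ceil_div_le2 //.
split=> [[[G_gt0 _] cond_le]|[_ _ _ G_lt]].
  split=> // x Gx; have := G_gt0 x Gx; have := mem_lt_conductor Gx; lia.
split; last by apply: conductor_leq => x /G_lt; lia.
split=> [z /G_lt|x y x_gt0 y_gt0 /G_lt xy_lt]; first lia.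
have [x_lt|y_lt] : x < multiplicity G \/ y < multiplicity G by lia.
  by left; apply: below_m; lia.
by right; apply: below_m; lia.
Qed.

Lemma gapset_g_depth_le2E g G :
  gapset_g_depth_le2 g G <-> shallow (multiplicity G) G /\ genus G = g.
Proof.
rewrite -shallowP /gapset_g_depth_le2.
by split=> [[? [? ?]]|[[? ?] ?]].
Qed.

Lemma shallow_fset0 : shallow 1 fset0.
Proof. by split=> // x; rewrite ?in_fset0 //; lia. Qed.

Lemma shallow1 G : shallow 1 G -> G = fset0.
Proof.
case=> _ _ one_notin G_lt; apply/fsetP => x; rewrite in_fset0.
by apply/negP => Gx; have := G_lt x Gx; case: (x =P 1) Gx one_notin => [-> ->|]; lia.
Qed.

Lemma shallow_fsetU1 m G z : shallow m G -> m < z < m.*2 -> shallow m (z |` G).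
Proof.
case=> m_gt0 below_m m_notin G_lt z_range; split=> // [x x_lt||].
- by rewrite in_fset1U below_m ?orbT.
- by rewrite in_fset1U negb_or m_notin andbT; lia.
- by move=> x; rewrite in_fset1U => /orP [/eqP ->|/G_lt]; lia.
Qed.

Section Bumpset.

Variable m : nat.

Definition bumpset (G : {fset nat}) : {fset nat} := m |` [fset bump m x | x in G].

Lemma bump_inj : injective (bump m).
Proof. exact: can_inj (bumpK m). Qed.

Lemma bump_small x : x < m -> bump m x = x.
Proof. by rewrite /bump; lia. Qed.

Lemma mem_bumpset G x : (bump m x \in bumpset G) = (x \in G).
Proof.
rewrite in_fset1U eq_sym (negbTE (neq_bump m x)) mem_imfset //.
exact: bump_inj.
Qed.

Lemma mem_bumpset_self G : m \in bumpset G.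
Proof. exact: fset1U1. Qed.

Lemma bumpset_inj : injective bumpset.
Proof.
by move=> G H eqGH; apply/fsetP => x; rewrite -(mem_bumpset G) -(mem_bumpset H) eqGH.
Qed.

Lemma genus_bumpset G : genus (bumpset G) = (genus G).+1.
Proof.
rewrite /genus cardfsU1 card_imfset /=; last exact: bump_inj.
suff -> : m \notin [fset bump m x | x in G] by [].
by apply/imfsetP => -[x _ /eqP]; rewrite (negbTE (neq_bump m x)).
Qed.

Lemma shallow_bumpset G : shallow m G -> shallow m.+1 (bumpset G).
Proof.
case=> m_gt0 below_m m_notin G_lt; split=> // [x x_lt||x].
- case: (x =P m) => [->|/eqP x_neq]; first exact: mem_bumpset_self.
  have x_small : x < m by lia.
  by rewrite -[x in x \in _](bump_small x_small) mem_bumpset below_m ?x_small; lia.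
- have -> : m.+1 = bump m m by rewrite /bump leqnn.
  by rewrite mem_bumpset.
- rewrite in_fset1U => /orP [/eqP ->|/imfsetP [y /G_lt y_range ->]]; rewrite /bump; lia.
Qed.

Lemma top_notin_bumpset G : shallow m G -> m.*2.+1 \notin bumpset G.
Proof.
case=> m_gt0 _ _ G_lt; rewrite in_fset1U negb_or; apply/andP; split; first lia.
by apply/imfsetP => -[y /G_lt y_range]; rewrite /bump; lia.
Qed.

Lemma mem_unbumpset (A : {fset nat}) y :
  m \notin A -> (y \in [fset unbump m x | x in A]) = (bump m y \in A).
Proof.
move=> m_notin; apply/imfsetP/idP => [[x Ax ->]|Ay].
  by rewrite unbumpK //; apply: contraNneq m_notin => <-.
by exists (bump m y); rewrite ?bumpK.
Qed.

End Bumpset.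

Definition lift1 (G : {fset nat}) : {fset nat} := bumpset (multiplicity G) G.

Definition lift2 (G : {fset nat}) : {fset nat} := (multiplicity G).*2.+1 |` lift1 G.

Lemma genus_lift1 G : genus (lift1 G) = (genus G).+1.
Proof. exact: genus_bumpset. Qed.

Section Lifts.

Variables (m : nat) (G : {fset nat}).
Hypothesis shallow_G : shallow m G.

Let multiplicity_G : multiplicity G = m.
Proof. exact: shallow_multiplicity. Qed.

Lemma shallow_lift1 : shallow m.+1 (lift1 G).
Proof. by rewrite /lift1 multiplicity_G; apply: shallow_bumpset. Qed.

Lemma shallow_lift2 : shallow m.+1 (lift2 G).
Proof.
have [m_gt0 _ _ _] := shallow_G.
by rewrite /lift2 multiplicity_G; apply: shallow_fsetU1 shallow_lift1 _; lia.
Qed.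

Lemma genus_lift2 : genus (lift2 G) = (genus G).+2.
Proof.
rewrite /lift2 /lift1 multiplicity_G {1}/genus cardfsU1 top_notin_bumpset //.
by rewrite add1n -/(genus _) genus_bumpset.
Qed.

Lemma top_notin_lift1 : m.*2.+1 \notin lift1 G.
Proof. by rewrite /lift1 multiplicity_G top_notin_bumpset. Qed.

Lemma multiplicity_lift1 : multiplicity (lift1 G) = m.+1.
Proof. exact/shallow_multiplicity/shallow_lift1. Qed.

Lemma multiplicity_lift2 : multiplicity (lift2 G) = m.+1.
Proof. exact/shallow_multiplicity/shallow_lift2. Qed.

End Lifts.

Section LiftInjective.

Variables (m n : nat) (G H : {fset nat}).
Hypotheses (shallow_G : shallow m G) (shallow_H : shallow n H).

Lemma lift1_inj : lift1 G = lift1 H -> G = H.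
Proof.
move=> eq_lift; have /eq_add_S eq_mn : m.+1 = n.+1.
  by rewrite -(multiplicity_lift1 shallow_G) -(multiplicity_lift1 shallow_H) eq_lift.
move: eq_lift; rewrite /lift1 (shallow_multiplicity shallow_G).
by rewrite (shallow_multiplicity shallow_H) eq_mn => /bumpset_inj.
Qed.

Lemma lift2_inj : lift2 G = lift2 H -> G = H.
Proof.
move=> eq_lift; have /eq_add_S eq_mn : m.+1 = n.+1.
  by rewrite -(multiplicity_lift2 shallow_G) -(multiplicity_lift2 shallow_H) eq_lift.
apply: lift1_inj; move: eq_lift (top_notin_lift1 shallow_G) (top_notin_lift1 shallow_H).
rewrite /lift2 (shallow_multiplicity shallow_G) (shallow_multiplicity shallow_H) eq_mn.
by move=> eq_lift /fsetU1K <- /fsetU1K <-; rewrite eq_lift.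
Qed.

Lemma lift1_neq_lift2 : lift1 G != lift2 H.
Proof.
apply/eqP => eq_lift; have /eq_add_S eq_mn : m.+1 = n.+1.
  by rewrite -(multiplicity_lift1 shallow_G) -(multiplicity_lift2 shallow_H) eq_lift.
have := top_notin_lift1 shallow_G; rewrite eq_lift /lift2.
by rewrite (shallow_multiplicity shallow_H) eq_mn fset1U1.
Qed.

End LiftInjective.

Lemma shallow_lift_surj m G : shallow m.+2 G ->
  exists2 H, shallow m.+1 H & G = lift1 H \/ G = lift2 H.
Proof.
set n := m.+1 => -[_ below_n1 n1_notin G_lt].
have n_in : n \in G by apply: below_n1; lia.
set A := G `\` [fset n; n.*2.+1]; set H := [fset unbump n x | x in A].
have n_notinA : n \notin A by rewrite in_fsetD in_fset2 eqxx.
have mem_H y : (y \in H) = [&& bump n y \in G, bump n y != n & bump n y != n.*2.+1].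
  by rewrite mem_unbumpset // in_fsetD in_fset2 negb_or andbC andbA.
have shallow_H : shallow n H.
  split=> // [x x_lt||x].
  - by rewrite mem_H below_n1; rewrite /bump; lia.
  - by rewrite mem_H /bump leqnn add1n (negbTE n1_notin).
  - by rewrite mem_H => /and3P [/G_lt]; rewrite /bump; lia.
have drop_top : G `\ n.*2.+1 = lift1 H.
  rewrite /lift1 (shallow_multiplicity shallow_H); apply/fsetP => z.
  case: (z =P n) => [->|/eqP z_neq]; first by rewrite in_fsetD1 n_in mem_bumpset_self; lia.
  rewrite -(unbumpK z_neq) mem_bumpset mem_H (unbumpK z_neq) z_neq in_fsetD1.
  by rewrite andbC.
exists H => //; case: (boolP (n.*2.+1 \in G)) => [top_in|top_notin]; [right|left].
  by rewrite /lift2 (shallow_multiplicity shallow_H) -drop_top fsetD1K.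
rewrite -drop_top; apply/fsetP => z; rewrite in_fsetD1.
by case: eqP => // ->; rewrite (negbTE top_notin).
Qed.

Lemma enumerates_N2_0 : enumerates_N2 0 [:: fset0].
Proof.
split=> // G; rewrite inE gapset_g_depth_le2E.
split=> [/eqP ->|[_ /cardfs0_eq ->] //].
by rewrite (shallow_multiplicity shallow_fset0); split=> //; apply: shallow_fset0.
Qed.

Lemma gapset_g_depth_le2_lift g G : gapset_g_depth_le2 g.+1 G ->
  exists2 H, shallow (multiplicity H) H &
    (G = lift1 H /\ genus H = g) \/ (G = lift2 H /\ (genus H).+1 = g).
Proof.
case/gapset_g_depth_le2E; case: (multiplicity G) => [[]|[/shallow1 ->|m shallow_G]] //.
move=> genus_G; have [H shallow_H [eqG|eqG]] := shallow_lift_surj shallow_G;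
  (exists H; first by rewrite (shallow_multiplicity shallow_H)); rewrite eqG in genus_G.
  by left; rewrite genus_lift1 in genus_G; case: genus_G.
by right; rewrite (genus_lift2 shallow_H) in genus_G; case: genus_G.
Qed.

Lemma enumerates_N2_1 : enumerates_N2 1 [:: lift1 fset0].
Proof.
split=> // G; rewrite inE; split=> [/eqP ->|/gapset_g_depth_le2_lift].
  apply/gapset_g_depth_le2E; rewrite genus_lift1 (multiplicity_lift1 shallow_fset0).
  by split=> //; apply: shallow_lift1 shallow_fset0.
by case=> H _ [[-> /cardfs0_eq ->]|[_ /eqP]].
Qed.

Lemma enumerates_N2_lift g L1 L2 : enumerates_N2 g.+1 L1 -> enumerates_N2 g L2 ->
  enumerates_N2 g.+2 (map lift1 L1 ++ map lift2 L2).
Proof.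
move=> [uniq_L1 mem_L1] [uniq_L2 mem_L2].
have shallow_L1 H : H \in L1 -> shallow (multiplicity H) H /\ genus H = g.+1.
  by move/mem_L1/gapset_g_depth_le2E.
have shallow_L2 H : H \in L2 -> shallow (multiplicity H) H /\ genus H = g.
  by move/mem_L2/gapset_g_depth_le2E.
split.
  rewrite cat_uniq; apply/and3P; split.
  - rewrite map_inj_in_uniq // => H K /shallow_L1 [sH _] /shallow_L1 [sK _].
    exact: lift1_inj sH sK.
  - apply/hasPn => _ /mapP [K /shallow_L2 [sK _] ->].
    apply/mapP => -[H /shallow_L1 [sH _]].
    by move=> eq_lift; have := lift1_neq_lift2 sH sK; rewrite eq_lift eqxx.
  - rewrite map_inj_in_uniq // => H K /shallow_L2 [sH _] /shallow_L2 [sK _].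
    exact: lift2_inj sH sK.
move=> G; rewrite mem_cat; split.
  case/orP => /mapP [H memH ->]; apply/gapset_g_depth_le2E.
    have [sH genus_H] := shallow_L1 H memH.
    by rewrite (multiplicity_lift1 sH) genus_lift1 genus_H; split=> //; apply: shallow_lift1.
  have [sH genus_H] := shallow_L2 H memH.
  by rewrite (multiplicity_lift2 sH) (genus_lift2 sH) genus_H; split=> //; apply: shallow_lift2.
case/gapset_g_depth_le2_lift => H sH [[-> genus_H]|[-> /eq_add_S genus_H]].
  by rewrite map_f //; apply/mem_L1/gapset_g_depth_le2E.
by rewrite map_f ?orbT //; apply/mem_L2/gapset_g_depth_le2E.
Qed.

Lemma enumerates_N2_exists g : exists L, enumerates_N2 g L.
Proof.
suff [[L enum_L] _] : (exists L, enumerates_N2 g L) /\ exists L, enumerates_N2 g.+1 L.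
  by exists L.
elim: g => [|g [[L0 enum_L0] [L1 enum_L1]]].
  by split; [exists [:: fset0]; apply: enumerates_N2_0
            |exists [:: lift1 fset0]; apply: enumerates_N2_1].
split; first by exists L1.
by exists (map lift1 L1 ++ map lift2 L0); apply: enumerates_N2_lift.
Qed.

Lemma enumerates_N2_size g L L' :
  enumerates_N2 g L -> enumerates_N2 g L' -> size L = size L'.
Proof.
move=> [uniq_L mem_L] [uniq_L' mem_L']; apply/perm_size/uniq_perm => // G.
by apply/idP/idP => [/mem_L/mem_L'|/mem_L'/mem_L].
Qed.

Local Close Scope fset_scope.

Theorem mainTheorem10 :
  (forall g : nat, exists L : seq {fset nat}, enumerates_N2 g L) /\
  (forall (g : nat) (L0 L1 L2 : seq {fset nat}),
      2 <= g ->
      enumerates_N2 g L0 -> enumerates_N2 g.-1 L1 -> enumerates_N2 g.-2 L2 ->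
      size L0 = size L1 + size L2).
Proof.
split=> [|[|[|g]] // L0 L1 L2 _ enum_L0 enum_L1 enum_L2]; first exact: enumerates_N2_exists.
rewrite (enumerates_N2_size enum_L0 (enumerates_N2_lift enum_L1 enum_L2)).
by rewrite size_cat !size_map.
Qed.
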